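(* Let $R$ be a $*$-ring. Then the following are equivalent: (1) $R$ is strongly $J$-$*$-clean. (2) $R$ is strongly $J$-clean and strongly $*$-clean. (3) $R$ is abelian and $R$ is $J$-$*$-clean.
   Context: All rings are associative with identity. A $*$-ring is a ring $R$ with an involution $*$, i.e. a map $a\mapsto a^*$ with $(a+b)^*=a^*+b^*$, $(ab)^*=b^*a^*$, $(a^* )^*=a$. $U(R)$ denotes the group of units and $J(R)$ the Jacobson radical of $R$. A projection is an element $e$ with $e^2=e=e^*$. $R$ is strongly $J$-$*$-clean if every $a\in R$ can be written $a=e+u$ with $e$ a projection, $u\in J(R)$ and $ae=ea$. $R$ is strongly $J$-clean if every $a\in R$ can be written $a=e+u$ with $e$ an idempotent, $u\in J(R)$ and $ae=ea$. $R$ is strongly $*$-clean if every $a\in R$ can be written $a=e+u$ with $e$ a projection, $u\in U(R)$ and $eu=ue$. $R$ is $J$-$*$-clean if every element of $R$ is the sum of a projection and an element of $J(R)$ (no commutation required). A ring is abelian if all its idempotents are central. *)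

From HB Require Import structures.
From mathcomp Require Import all_boot all_order all_algebra.
Set Implicit Arguments. Unset Strict Implicit. Unset Printing Implicit Defensive.
Import GRing.Theory.
Local Open Scope ring_scope.

Definition is_involution (R : pzRingType) (s : R -> R) : Prop :=
  (forall a b : R, s (a + b) = s a + s b) /\
  (forall a b : R, s (a * b) = s b * s a) /\
  (forall a : R, s (s a) = a).

Definition is_unit (R : pzRingType) (u : R) : Prop :=
  exists v : R, u * v = 1 /\ v * u = 1.

(* J(R): Jacobson radical, via the standard characterization
   a \in J(R) <-> 1 - r a is a unit for every r. *)
Definition in_jacobson (R : pzRingType) (a : R) : Prop :=
  forall r : R, is_unit (1 - r * a).

Definition idempotent (R : pzRingType) (e : R) : Prop := e * e = e.

Definition projection (R : pzRingType) (s : R -> R) (e : R) : Prop :=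
  e * e = e /\ s e = e.

Definition strongly_J_star_clean (R : pzRingType) (s : R -> R) : Prop :=
  forall a : R, exists e u : R,
    a = e + u /\ projection s e /\ in_jacobson u /\ a * e = e * a.

Definition strongly_J_clean (R : pzRingType) : Prop :=
  forall a : R, exists e u : R,
    a = e + u /\ idempotent e /\ in_jacobson u /\ a * e = e * a.

Definition strongly_star_clean (R : pzRingType) (s : R -> R) : Prop :=
  forall a : R, exists e u : R,
    a = e + u /\ projection s e /\ is_unit u /\ e * u = u * e.

Definition J_star_clean (R : pzRingType) (s : R -> R) : Prop :=
  forall a : R, exists e u : R,
    a = e + u /\ projection s e /\ in_jacobson u.

Definition abelian_ring (R : pzRingType) : Prop :=
  forall e : R, idempotent e -> forall x : R, e * x = x * e.

(* Everything turns on the condition that every idempotent is a projection.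
   If it holds, then for an idempotent g the idempotent g + g x (1 - g) is
   self-adjoint, which forces the corner g x (1 - g) to vanish; applied to g and
   to 1 - g this makes R abelian.  It holds in a strongly J-*-clean ring and in
   a strongly *-clean ring: writing an idempotent g as a projection e plus a
   radical element (resp. a unit) commuting with it, two commuting idempotents
   whose difference is radical are equal, and two whose difference is a unit
   are complementary.  For the converse passages one only transports the
   commutation or self-adjointness, using that 2e - 1 is a unit and that a
   unit plus a radical element is a unit. *)
From Pilot Require Import Defs.
From mathcomp Require Import all_boot all_order all_algebra.
Import GRing.Theory.
Local Open Scope ring_scope.
Set Implicit Arguments.
Unset Strict Implicit.

Definition idempotents_projections (R : pzRingType) (s : R -> R) : Prop :=
  forall e : R, Defs.idempotent e -> projection s e.

Section Ring.
Variable R : pzRingType.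
Implicit Types t u w x e f g : R.

Lemma is_unit_mul_eq0 w x : is_unit w -> w * x = 0 -> x = 0.
Proof. by move=> [v [_ vw]] wx0; rewrite -[x]mul1r -vw -mulrA wx0 mulr0. Qed.

Lemma is_unitM t u : is_unit t -> is_unit u -> is_unit (t * u).
Proof.
move=> [v [tv vt]] [w [uw wu]]; exists (w * v); split.
  by rewrite mulrA -(mulrA t) uw mulr1 tv.
by rewrite mulrA -(mulrA w) vt mulr1 wu.
Qed.

Lemma is_unitDj t u : is_unit t -> in_jacobson u -> is_unit (t + u).
Proof.
move=> [v [tv vt]] Ju.
have -> : t + u = t * (1 - (- v) * u) by rewrite mulNr opprK mulrDr mulr1 mulrA tv mul1r.
by apply: is_unitM; first by exists v.
Qed.

Lemma idempotentC e : Defs.idempotent e -> Defs.idempotent (1 - e).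
Proof. by rewrite /Defs.idempotent mulrBr mulr1 mulrBl mul1r => ->; rewrite subrr subr0. Qed.

Lemma is_unit_reflection e : Defs.idempotent e -> is_unit (e + e - 1).
Proof.
move=> ee; have sq1 : (e + e - 1) * (e + e - 1) = 1.
  by rewrite mulrBr mulr1 mulrBl mul1r !mulrDl !mulrDr ee addrK opprB addrC subrK.
by exists (e + e - 1).
Qed.

Lemma idempotentD_corner g y :
  Defs.idempotent g -> g * y = y -> y * g = 0 -> Defs.idempotent (g + y).
Proof.
move=> gg gy yg; have yy : y * y = 0 by rewrite -{2}gy mulrA yg mul0r.
by rewrite /Defs.idempotent mulrDl !mulrDr gg gy yg yy !addr0.
Qed.

Section CommutingIdempotents.
Variables f e : R.
Hypotheses (ff : Defs.idempotent f) (ee : Defs.idempotent e) (fe_ef : f * e = e * f).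

Lemma commuting_idempotents_unit_subr : is_unit (f - e) -> f = 1 - e.
Proof.
move=> Ufe.
have fe0 : f * e = 0.
  apply: (is_unit_mul_eq0 Ufe).
  by rewrite mulrBl mulrA ff mulrA -fe_ef -mulrA ee subrr.
have : 1 - f - e = 0.
  apply: (is_unit_mul_eq0 Ufe).
  rewrite !mulrBr mulr1 !mulrBl ff fe0 -fe_ef fe0 ee !subr0 sub0r opprK.
  by rewrite addrAC subrK subrr.
by rewrite addrAC => /subr0_eq ->.
Qed.

Lemma commuting_idempotents_absorb : is_unit (1 - (f - e)) -> f = f * e.
Proof.
move=> U; apply/eqP; rewrite -subr_eq0; apply/eqP; apply: (is_unit_mul_eq0 U).
have efe : e * (f * e) = f * e by rewrite mulrA -fe_ef -mulrA ee.
rewrite mulrBl mul1r !mulrBl !mulrBr ff mulrA ff efe -fe_ef.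
by rewrite subrr subr0 subrr.
Qed.

End CommutingIdempotents.

Lemma commuting_idempotents_jacobson_subr f e :
  Defs.idempotent f -> Defs.idempotent e -> f * e = e * f -> in_jacobson (f - e) -> f = e.
Proof.
move=> ff ee fe_ef Jfe.
have Ufe : is_unit (1 - (f - e)) by have := Jfe 1; rewrite mul1r.
have Uef : is_unit (1 - (e - f)) by have := Jfe (-1); rewrite mulN1r opprB.
rewrite (commuting_idempotents_absorb ff ee fe_ef Ufe) fe_ef.
by rewrite -(commuting_idempotents_absorb ee ff (esym fe_ef) Uef).
Qed.

End Ring.

Section StarRing.
Variables (R : pzRingType) (s : R -> R).
Implicit Types e g x y : R.

Lemma strongly_J_star_clean_J_clean : strongly_J_star_clean s -> strongly_J_clean R.
Proof. by move=> C a; have [e [u [aE [[ee _] J_ae]]]] := C a; exists e, u. Qed.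

Lemma strongly_J_star_clean_J_star_clean : strongly_J_star_clean s -> J_star_clean s.
Proof. by move=> C a; have [e [u [aE [Pe [Ju _]]]]] := C a; exists e, u. Qed.

Lemma strongly_J_star_clean_idempotents_projections :
  strongly_J_star_clean s -> idempotents_projections s.
Proof.
move=> C g gg; have [e [u [gE [Pe [Ju ge_eg]]]]] := C g.
have Jge : in_jacobson (g - e) by rewrite gE addrC addKr.
by rewrite (commuting_idempotents_jacobson_subr gg Pe.1 ge_eg Jge).
Qed.

Lemma strongly_J_star_clean_of_J_clean :
  strongly_J_clean R -> idempotents_projections s -> strongly_J_star_clean s.
Proof.
move=> C Ps a; have [e [u [aE [ee [Ju ae_ea]]]]] := C a.
have [_ se] := Ps e ee.
by exists e, u; do !split.
Qed.

Lemma strongly_J_star_clean_of_abelian :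
  abelian_ring R -> J_star_clean s -> strongly_J_star_clean s.
Proof.
move=> A C a; have [e [u [aE [[ee se] Ju]]]] := C a.
by exists e, u; do !split => //; rewrite (A e ee).
Qed.

Section Involution.
Hypothesis hs : is_involution s.

Lemma involution0 : s 0 = 0.
Proof. by case: hs => sD _; apply: (addrI (s 0)); rewrite addr0 -sD addr0. Qed.

Lemma involution1 : s 1 = 1.
Proof. by case: hs => [_ [sM sK]]; rewrite -[s 1]mulr1 -{2}(sK 1) -sM mulr1 sK. Qed.

Lemma projectionC e : projection s e -> projection s (1 - e).
Proof.
case: hs => sD _ [ee se]; split; first exact: idempotentC.
by apply/eqP; rewrite eq_sym subr_eq -{2}se -sD subrK involution1.
Qed.

Lemma idempotents_projections_corner g x :
  idempotents_projections s -> Defs.idempotent g -> g * x * (1 - g) = 0.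
Proof.
case: hs => sD [sM _] Ps gg; set y := g * x * (1 - g).
have gy : g * y = y by rewrite /y !mulrA gg.
have yg : y * g = 0.
  by rewrite /y -mulrA mulrBl mul1r gg subrr mulr0.
have [_ sg] := Ps g gg.
have [_] := Ps _ (idempotentD_corner gg gy yg); rewrite sD sg => /addrI sy.
by rewrite -gy -{1}sg -sy -sM yg involution0.
Qed.

Lemma idempotents_projections_abelian : idempotents_projections s -> abelian_ring R.
Proof.
move=> Ps g gg x.
have gx := idempotents_projections_corner x Ps gg.
have xg := idempotents_projections_corner x Ps (idempotentC gg).
move: gx; rewrite mulrBr mulr1 => /subr0_eq ->.
by move: xg; rewrite subKr !mulrBl !mul1r => /subr0_eq <-.
Qed.

Lemma strongly_star_clean_idempotents_projections :
  strongly_star_clean s -> idempotents_projections s.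
Proof.
move=> C g gg; have [e [u [gE [[ee se] [Uu eu_ue]]]]] := C g.
have ge_eg : g * e = e * g by rewrite gE mulrDl mulrDr ee eu_ue.
have Uge : is_unit (g - e) by rewrite gE addrC addKr.
rewrite (commuting_idempotents_unit_subr gg ee ge_eg Uge).
exact: projectionC.
Qed.

Lemma strongly_J_star_clean_star_clean :
  strongly_J_star_clean s -> strongly_star_clean s.
Proof.
move=> C a; have [e [u [aE [[ee se] [Ju ae_ea]]]]] := C a.
have eu_ue : e * u = u * e.
  by move: ae_ea; rewrite aE mulrDl mulrDr ee => /addrI.
set t := e + e - 1.
have et_te : e * t = t * e.
  by rewrite /t mulrBr mulrBl mulrDr mulrDl ee mulr1 mul1r.
exists (1 - e), (t + u); split; last split.
- by rewrite aE /t !addrA subrK [1 + e]addrC addrK.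
- exact: projectionC.
split; first exact: is_unitDj (is_unit_reflection ee) Ju.
by apply/esym; rewrite mulrBr mulr1 mulrBl mul1r mulrDr mulrDl et_te eu_ue.
Qed.

End Involution.

End StarRing.

Theorem proposition2p1 (R : pzRingType) (s : R -> R) (Hs : is_involution s) :
  (strongly_J_star_clean s <-> strongly_J_clean R /\ strongly_star_clean s) /\
  (strongly_J_star_clean s <-> abelian_ring R /\ J_star_clean s).
Proof.
split; split.
- move=> C; split; first exact: strongly_J_star_clean_J_clean.
  exact: strongly_J_star_clean_star_clean.
- move=> [CJ CS]; apply: strongly_J_star_clean_of_J_clean => //.
  exact: strongly_star_clean_idempotents_projections.
- move=> C; split; last exact: strongly_J_star_clean_J_star_clean.
  apply: (idempotents_projections_abelian Hs).
  exact: strongly_J_star_clean_idempotents_projections.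
- by move=> [A C]; exact: strongly_J_star_clean_of_abelian.
Qed.
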